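(* Let $G$ be any graph in the class $\mathcal{G}$ (defined in the context), and suppose $L(T_G^0)=L(T_G^1)=k+1$ for a positive integer $k$. Then for each vertex $V$ of $G$, the binary string $\phi_G(V)$ has length $2^{k+1-L(V)}$. In particular, $\phi_G(V_G^r)$ has length $2^k$.
   Context: $\mathcal{G}$ is the set of all finite graphs $G$ such that: (a) $G$ is directed and acyclic; (b) $G$ has a unique nonterminal vertex $V_G^r$ (the root) such that every other vertex is reachable from $V_G^r$ by a directed path; (c) $G$ has exactly two terminal vertices (vertices with no outgoing edges), denoted $T_G^0$ and $T_G^1$; (d) from each nonterminal vertex emanate exactly two edges, one labelled $0$ and one labelled $1$, terminating at different vertices; (e) each vertex $V$ carries a positive integer level $L(V)$ with $L(V_G^r)=1$, $L(T_G^0)=L(T_G^1)$, and levels strictly increasing along every directed path (not necessarily consecutively). For a binary string $y$ and positive integer $j$, $y^j$ denotes the concatenation of $j$ copies of $y$; juxtaposition denotes concatenation. The map $\phi_G$ from the vertex set of $G$ to the set of nonempty finite binary strings is defined by $\phi_G(T_G^0)=0$, $\phi_G(T_G^1)=1$, and for a nonterminal vertex $V$ whose $0$-edge leads to $V_0$ and whose $1$-edge leads to $V_1$, $\phi_G(V)=\phi_G(V_0)^{(2^{L(V_0)-L(V)-1})}\phi_G(V_1)^{(2^{L(V_1)-L(V)-1})}$. *)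

From mathcomp Require Import all_boot.
Set Implicit Arguments. Unset Strict Implicit. Unset Printing Implicit Defensive.

(* A graph in the class G is given by a finite vertex type V, a predicate
   [term] marking the terminal vertices (no outgoing edges), and for each
   nonterminal vertex v its 0-successor [c0 v] and 1-successor [c1 v]
   (values of c0, c1 at terminal vertices are irrelevant), a level function L,
   the root r and the two terminals t0 = T^0, t1 = T^1. *)

Definition gedge (V : finType) (term : pred V) (c0 c1 : V -> V) : rel V :=
  fun u w => ~~ term u && ((c0 u == w) || (c1 u == w)).

Definition in_class (V : finType) (term : pred V) (c0 c1 : V -> V)
    (L : V -> nat) (r t0 t1 : V) : Prop :=
  let e := gedge term c0 c1 in
  [/\
      (forall u w, e u w -> ~~ connect e w u),
      [/\ ~~ term r, (forall v, connect e r v) &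
          (forall r', ~~ term r' -> (forall v, connect e r' v) -> r' = r)],
      [/\ t0 != t1, term t0, term t1 & (forall v, term v -> v = t0 \/ v = t1)],
      (forall v, ~~ term v -> c0 v != c1 v) &
      [/\ (forall v, 0 < L v), L r = 1, L t0 = L t1 &
          (forall u w, e u w -> L u < L w)]].

Definition srep (s : seq bool) (j : nat) : seq bool := flatten (nseq j s).

(* phi_G computed by structural recursion with fuel; with fuel #|V| this is the
   unique map satisfying the recursive defining equations on acyclic graphs
   (every directed path has fewer than #|V| edges). *)
Fixpoint phi_aux (V : finType) (term : pred V) (c0 c1 : V -> V) (L : V -> nat)
    (t0 t1 : V) (n : nat) (v : V) : seq bool :=
  if term v then
    (if v == t0 then [:: false] else if v == t1 then [:: true] else [::])
  else match n with
  | 0 => [::]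
  | n'.+1 =>
      srep (phi_aux term c0 c1 L t0 t1 n' (c0 v)) (2 ^ (L (c0 v) - L v - 1))
      ++ srep (phi_aux term c0 c1 L t0 t1 n' (c1 v)) (2 ^ (L (c1 v) - L v - 1))
  end.

Definition phi (V : finType) (term : pred V) (c0 c1 : V -> V) (L : V -> nat)
    (t0 t1 : V) (v : V) : seq bool :=
  phi_aux term c0 c1 L t0 t1 #|V| v.

(* phi is computed with fuel #|V|, so one must show the fuel never runs out:
   in an acyclic graph every directed path is duplicate-free, hence has fewer
   than #|V| edges, so descending #|V| times along 0/1-edges always reaches a
   terminal.  With enough fuel the length claim follows by induction, since
   for an edge u -> w the factor 2^(L w - L u - 1) from the repetition and the
   length 2^(K - L w) of phi w multiply to 2^(K - L u - 1), the same for both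
   children of u. *)
From mathcomp Require Import all_boot.
From mathcomp Require Import zify.

Set Implicit Arguments.
Unset Strict Implicit.
Unset Printing Implicit Defensive.

Lemma size_srep (s : seq bool) j : size (srep s j) = j * size s.
Proof. by elim: j => //= j IH; rewrite size_cat -/(srep s j) IH mulSn. Qed.

Lemma expn2_level_step l a K :
  l < a <= K -> 2 ^ (a - l - 1) * 2 ^ (K - a) = 2 ^ (K - l).-1.
Proof. by move=> la; rewrite -expnD; congr (2 ^ _); lia. Qed.

Lemma acyclic_path_uniq (T : finType) (e : rel T) :
  (forall u w, e u w -> ~~ connect e w u) ->
  forall v p, path e v p -> uniq (v :: p).
Proof.
move=> acyclic v p; elim: p v => //= w p IH v /andP [evw wp].
rewrite IH // andbT; apply: contraNN (acyclic _ _ evw) => v_wp.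
exact: path_connect wp v v_wp.
Qed.

Lemma acyclic_path_size_lt (T : finType) (e : rel T) :
  (forall u w, e u w -> ~~ connect e w u) ->
  forall v p, path e v p -> size p < #|T|.
Proof.
move=> acyclic v p /(acyclic_path_uniq acyclic) /card_uniqP /= card_vp.
by rewrite -ltnS -card_vp ltnS max_card.
Qed.

Section Phi.

Variables (V : finType) (term : pred V) (c0 c1 : V -> V) (L : V -> nat).
Variables (t0 t1 : V).

Let e := gedge term c0 c1.

Fixpoint terminates_within (n : nat) (v : V) : bool :=
  term v || if n is n'.+1
            then terminates_within n' (c0 v) && terminates_within n' (c1 v)
            else false.

Lemma path_of_not_terminates_within n v :
  ~~ terminates_within n v -> exists2 p, size p = n & path e v p.
Proof.
elim: n v => [|n IH] v /=; first by exists [::].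
rewrite negb_or negb_and => /andP [nt_v /orP [] /IH [p <- pp]].
- by exists (c0 v :: p); rewrite //= pp andbT /e /gedge nt_v eqxx.
- by exists (c1 v :: p); rewrite //= pp andbT /e /gedge nt_v eqxx orbT.
Qed.

Lemma acyclic_terminates_within :
  (forall u w, e u w -> ~~ connect e w u) -> forall v, terminates_within #|V| v.
Proof.
move=> acyclic v; apply/negPn/negP.
move=> /path_of_not_terminates_within [p sp /(acyclic_path_size_lt acyclic)].
by rewrite sp ltnn.
Qed.

Variable K : nat.
Hypothesis terminal_t01 : forall v, term v -> v = t0 \/ v = t1.
Hypotheses (L_t0 : L t0 = K) (L_t1 : L t1 = K).
Hypothesis level_increasing : forall u w, e u w -> L u < L w.

Lemma terminal_level_size_phi_aux n v :
  term v -> L v = K /\ size (phi_aux term c0 c1 L t0 t1 n v) = 1.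
Proof.
move=> tv; have -> : phi_aux term c0 c1 L t0 t1 n v =
    if v == t0 then [:: false] else if v == t1 then [:: true] else [::].
  by case: n => /=; rewrite tv.
by case: (terminal_t01 tv) => ->; rewrite ?L_t0 ?L_t1 eqxx /=; do ?case: ifP.
Qed.

Lemma size_phi_aux n v :
  terminates_within n v ->
  L v <= K /\ size (phi_aux term c0 c1 L t0 t1 n v) = 2 ^ (K - L v).
Proof.
elim: n v => [|n IH] v within; case tv: (term v).
- by case: (terminal_level_size_phi_aux 0 tv) => -> ->; rewrite subnn.
- by rewrite /= tv in within.
- by case: (terminal_level_size_phi_aux n.+1 tv) => -> ->; rewrite subnn.
move: within; rewrite /= tv => /andP [/IH [le0 size0] /IH [le1 size1]].
have lt0 : L v < L (c0 v) by apply: level_increasing; rewrite /e /gedge tv eqxx.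
have lt1 : L v < L (c1 v) by apply: level_increasing; rewrite /e /gedge tv eqxx orbT.
split; first lia.
rewrite size_cat !size_srep size0 size1.
rewrite !expn2_level_step ?lt0 ?lt1 // addnn -mul2n -expnS.
by congr (2 ^ _); lia.
Qed.

End Phi.

Theorem lemma1 (V : finType) (term : pred V) (c0 c1 : V -> V) (L : V -> nat)
    (r t0 t1 : V) (HG : in_class term c0 c1 L r t0 t1)
    (k : nat) (hk : 0 < k) (hL0 : L t0 = k.+1) (hL1 : L t1 = k.+1) :
  (forall v : V, size (phi term c0 c1 L t0 t1 v) = 2 ^ (k.+1 - L v))
  /\ size (phi term c0 c1 L t0 t1 r) = 2 ^ k.
Proof.
case: HG => acyclic _ [_ _ _ terminal_t01] _ [_ L_r _ level_increasing].
have size_phi v : size (phi term c0 c1 L t0 t1 v) = 2 ^ (k.+1 - L v).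
  have := acyclic_terminates_within acyclic v.
  by move=> /(size_phi_aux terminal_t01 hL0 hL1 level_increasing) [].
by split => //; rewrite size_phi L_r subn1.
Qed.
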